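(* Consider a block-fading channel with channel power gain $h(\nu)\ge0$ (a random variable with continuous pdf) at fading state $\nu$, constant transmit power $P>0$, and noise power $\sigma^2>0$. For a target $0\le\bar Q\le E_\nu[h(\nu)P]$, let Problem (P1) be: maximize over $\{\alpha(\nu)\}$ the quantity $E_\nu\big[\log\big(1+\frac{\alpha(\nu)h(\nu)P}{\sigma^2}\big)\big]$ subject to $E_\nu[(1-\alpha(\nu))h(\nu)P]\ge\bar Q$ and $0\le\alpha(\nu)\le1$ for all $\nu$. Let $\lambda^\ast\ge0$ be the optimal dual solution of (P1), i.e. a minimizer over $\lambda\ge0$ of the dual function $g(\lambda)=\max_{0\le\alpha(\nu)\le1}\big\{E_\nu[\log(1+\alpha(\nu)h(\nu)P/\sigma^2)]+\lambda\big(E_\nu[(1-\alpha(\nu))h(\nu)P]-\bar Q\big)\big\}$. Then the optimal solution of (P1) is $\alpha^\ast(\nu)=\frac{1}{\lambda^\ast h(\nu)P}-\frac{\sigma^2}{h(\nu)P}$ if $h(\nu)\ge\frac{1}{\lambda^\ast P}-\frac{\sigma^2}{P}$, and $\alpha^\ast(\nu)=1$ otherwise.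
   Context: $\log$ is the natural logarithm. $\alpha(\nu)$ is the fraction of the received power at fading state $\nu$ split to the information decoder; $1-\alpha(\nu)$ is split to the energy harvester. *)

From HB Require Import structures.
From mathcomp Require Import all_boot all_order all_algebra.
From mathcomp Require Import all_classical all_reals all_analysis.
Set Implicit Arguments. Unset Strict Implicit. Unset Printing Implicit Defensive.
Import Order.TTheory GRing.Theory Num.Theory.
Local Open Scope classical_set_scope.
Local Open Scope ring_scope.

(* Fading states nu range over a probability space (T, Pr); h : T -> R is the
   channel power gain, Pt > 0 the transmit power, s2 > 0 the noise power
   sigma^2, Qbar the harvesting target. *)

Definition box_feasible {d} {T : measurableType d} {R : realType}
  (a : T -> R) : Prop :=
  measurable_fun setT a /\ (forall x, 0 <= a x <= 1).

Definition rate_obj {d} {T : measurableType d} {R : realType}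
  (Pr : probability T R) (h : T -> R) (Pt s2 : R) (a : T -> R) : \bar R :=
  (\int[Pr]_x (ln (1 + a x * h x * Pt / s2))%:E)%E.

Definition harvest {d} {T : measurableType d} {R : realType}
  (Pr : probability T R) (h : T -> R) (Pt : R) (a : T -> R) : \bar R :=
  (\int[Pr]_x ((1 - a x) * h x * Pt)%:E)%E.

Definition lagrangian {d} {T : measurableType d} {R : realType}
  (Pr : probability T R) (h : T -> R) (Pt s2 Qbar lam : R) (a : T -> R)
  : \bar R :=
  (rate_obj Pr h Pt s2 a + lam%:E * (harvest Pr h Pt a - Qbar%:E))%E.

Definition dual_fun {d} {T : measurableType d} {R : realType}
  (Pr : probability T R) (h : T -> R) (Pt s2 Qbar lam : R) : \bar R :=
  ereal_sup [set lagrangian Pr h Pt s2 Qbar lam a | a in @box_feasible d T R].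

Definition dual_optimal {d} {T : measurableType d} {R : realType}
  (Pr : probability T R) (h : T -> R) (Pt s2 Qbar lam : R) : Prop :=
  0 <= lam /\
  (forall l, 0 <= l -> (dual_fun Pr h Pt s2 Qbar lam <= dual_fun Pr h Pt s2 Qbar l)%E).

Definition P1_feasible {d} {T : measurableType d} {R : realType}
  (Pr : probability T R) (h : T -> R) (Pt Qbar : R) (a : T -> R) : Prop :=
  box_feasible a /\ (Qbar%:E <= harvest Pr h Pt a)%E.

Definition P1_optimal {d} {T : measurableType d} {R : realType}
  (Pr : probability T R) (h : T -> R) (Pt s2 Qbar : R) (a : T -> R) : Prop :=
  P1_feasible Pr h Pt Qbar a /\
  (forall b, P1_feasible Pr h Pt Qbar b ->
     (rate_obj Pr h Pt s2 b <= rate_obj Pr h Pt s2 a)%E).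

(* The claimed optimal policy. For lam = 0 the threshold
   1/(lam P) - sigma^2/P is +infinity, so the condition never holds and
   alpha = 1; this is made explicit (Rocq would otherwise read 1/0 as 0). *)
Definition alpha_star {T} {R : realType} (h : T -> R) (Pt s2 lam : R)
  (x : T) : R :=
  if lam == 0 then 1
  else if 1 / (lam * Pt) - s2 / Pt <= h x
       then 1 / (lam * h x * Pt) - s2 / (h x * Pt)
       else 1.

(* Fix a dual level l with 0 <= l <= 1/s2. The integrand of the Lagrangian,
   ln (1 + a h P / s2) + l (1 - a) h P, is concave in a, and alpha_star is its
   maximiser on [0, 1]: a h P is the water-filling level min (h P) (1/l - s2).
   Hence g(l) is the Lagrangian at alpha_star(l), and dual optimality of lam
   gives (lam - l) (E[(1 - alpha_star(l)) h P] - Qbar) <= 0 for all such l.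
   At l = 1/s2 the harvested power is E[h P] > Qbar, which forces lam <= 1/s2.
   The harvested power of alpha_star(l) is 1-Lipschitz in 1/l, so letting l
   tend to lam from both sides gives complementary slackness: alpha_star(lam)
   is feasible, with equality in the constraint when lam > 0.  For lam = 0,
   dominated convergence as l -> 0 shows Qbar <= 0.  Weak duality concludes. *)

From HB Require Import structures.
From mathcomp Require Import all_boot all_order all_algebra.
From mathcomp Require Import all_classical all_reals all_analysis.
From mathcomp Require Import measurable_realfun.
From mathcomp.algebra_tactics Require Import ring lra.
Import Order.TTheory GRing.Theory Num.Theory.
Local Open Scope ring_scope.

Lemma ln_le_tangent (R : realType) (y0 y : R) : 0 < y0 -> 0 < y ->
  ln y <= ln y0 + (y - y0) / y0.
Proof.
move=> y0_gt0 y_gt0; have yy0_gt0 : 0 < y / y0 by rewrite divr_gt0.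
have := @le_ln1Dx R (y / y0 - 1); rewrite addrCA subrr addr0 ln_div ?posrE //.
rewrite mulrBl mulfV ?gt_eqF //; lra.
Qed.

Section water_filling.
Context {R : realType} {Pt s2 : R}.
Hypotheses (Pt_gt0 : 0 < Pt) (s2_gt0 : 0 < s2).

Lemma alpha_star0 {T} (h : T -> R) x : alpha_star h Pt s2 0 x = 1.
Proof. by rewrite /alpha_star eqxx. Qed.

Lemma alpha_star_gt0E {T} (h : T -> R) l x : 0 < l ->
  alpha_star h Pt s2 l x =
  if (l^-1 - s2) / Pt <= h x then (l^-1 - s2) / (h x * Pt) else 1.
Proof.
move=> l_gt0; rewrite /alpha_star gt_eqF // !div1r !invfM.
by congr (if _ <= _ then _ else _); ring.
Qed.

Lemma water_level_ge0 {l} : 0 < l -> l * s2 <= 1 -> 0 <= l^-1 - s2.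
Proof. by move=> l_gt0 ls; rewrite subr_ge0 -(ler_pM2l l_gt0) mulfV ?gt_eqF. Qed.

Lemma mul_alpha_star_min {l r} : 0 < l -> l * s2 <= 1 -> 0 <= r ->
  r * Pt * alpha_star id Pt s2 l r = Num.min (r * Pt) (l^-1 - s2).
Proof.
move=> l_gt0 ls r_ge0; have k_ge0 := water_level_ge0 l_gt0 ls.
rewrite alpha_star_gt0E //=; case: ifPn => hr.
- rewrite ler_pdivrMr // in hr.
  have [r0|r_neq0] := eqVneq r 0.
    rewrite r0 mul0r in hr *; have -> : l^-1 - s2 = 0 by lra.
    by rewrite mul0r /Num.min ltxx.
  rewrite mulrC mulfVK; last by rewrite mulf_neq0 // gt_eqF.
  by rewrite /Num.min ltNge hr.
- rewrite -ltNge ltr_pdivlMr // in hr.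
  by rewrite mulr1 /Num.min hr.
Qed.

Lemma alpha_star_itv {l r} : 0 <= l -> l * s2 <= 1 -> 0 <= r ->
  0 <= alpha_star id Pt s2 l r <= 1.
Proof.
move=> l_ge0 ls r_ge0.
have [->|l_neq0] := eqVneq l 0; first by rewrite alpha_star0 ler01 lexx.
have l_gt0 : 0 < l by rewrite lt_def l_neq0.
rewrite alpha_star_gt0E //=; case: ifPn => hr; last by rewrite ler01 lexx.
rewrite ler_pdivrMr // in hr.
have [->|r_neq0] := eqVneq r 0; first by rewrite mul0r invr0 mulr0 ler01 lexx.
have rP_gt0 : 0 < r * Pt by rewrite mulr_gt0 // lt_def r_neq0.
by rewrite divr_ge0 ?water_level_ge0 ?(ltW rP_gt0) //= ler_pdivrMr // mul1r.
Qed.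

Lemma alpha_star_nonincreasing l : 0 <= l -> l * s2 <= 1 ->
  {homo alpha_star id Pt s2 l : x y / x <= y >-> y <= x}.
Proof.
move=> l_ge0 ls x y xy.
have [->|l_neq0] := eqVneq l 0; first by rewrite !alpha_star0.
have l_gt0 : 0 < l by rewrite lt_def l_neq0.
have := water_level_ge0 l_gt0 ls; rewrite !alpha_star_gt0E //=.
set k := l^-1 - s2 => k_ge0.
have [k0|k_neq0] := eqVneq k 0.
  rewrite k0 !mul0r; case: ifPn => hy; case: ifPn => hx //; rewrite ?ler01 //.
  rewrite -ltNge in hy; lra.
have kP_gt0 : 0 < k / Pt by rewrite divr_gt0 // lt_def k_neq0.
case: ifPn => hy; case: ifPn => hx //.
- have x0 : 0 < x * Pt by rewrite mulr_gt0 // (lt_le_trans kP_gt0).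
  have y0 : 0 < y * Pt by rewrite mulr_gt0 // (lt_le_trans kP_gt0).
  by rewrite ler_wpM2l // lef_pV2 ?posrE // ler_pM2r.
- have y0 : 0 < y * Pt by rewrite mulr_gt0 // (lt_le_trans kP_gt0).
  by rewrite ler_pdivrMr // mul1r -ler_pdivrMr.
- by rewrite -ltNge in hy; have := le_lt_trans (le_trans hx xy) hy; rewrite ltxx.
Qed.

Lemma mul_alpha_star_lipschitz {l1 l2 r} :
  0 < l1 -> l1 <= l2 -> l2 * s2 <= 1 -> 0 <= r ->
  0 <= r * Pt * alpha_star id Pt s2 l1 r - r * Pt * alpha_star id Pt s2 l2 r
    <= l1^-1 - l2^-1.
Proof.
move=> l1_gt0 l12 l2s r_ge0.
have l2_gt0 : 0 < l2 := lt_le_trans l1_gt0 l12.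
have l1s : l1 * s2 <= 1 by apply: le_trans l2s; rewrite ler_pM2r.
have : l2^-1 <= l1^-1 by rewrite lef_pV2 ?posrE.
rewrite !mul_alpha_star_min // /Num.min; case: ifPn; case: ifPn; lra.
Qed.

Lemma rate_arg_gt0 c r : 0 <= c -> 0 <= r -> 0 < 1 + c * r * Pt / s2.
Proof.
by move=> c_ge0 r_ge0; apply: ltr_pwDl; rewrite // divr_ge0 ?mulr_ge0 // ltW.
Qed.

(* The tangent of [ln] at the water-filling point bounds the rate; the
   marginal rate [u / (s2 + a u)] equals [l] when [0 < a < 1] and is at
   least [l] when [a = 1]. *)
Lemma alpha_star_lagrangian_max l r b : 0 <= l -> l * s2 <= 1 -> 0 <= r ->
  0 <= b <= 1 ->
  ln (1 + b * r * Pt / s2) + l * ((1 - b) * r * Pt) <=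
  ln (1 + alpha_star id Pt s2 l r * r * Pt / s2)
    + l * ((1 - alpha_star id Pt s2 l r) * r * Pt).
Proof.
move=> l_ge0 ls r_ge0 /andP[b_ge0 b_le1].
have /andP[a_ge0 a_le1] := alpha_star_itv l_ge0 ls r_ge0.
have [l0|l_neq0] := eqVneq l 0.
  rewrite l0 alpha_star0 !mul0r !addr0 ler_ln ?posrE.
  - by rewrite lerD2l -!mulrA ler_wpM2r // !mulr_ge0 // ?invr_ge0 ltW.
  - exact: rate_arg_gt0.
  - exact: rate_arg_gt0.
have l_gt0 : 0 < l by rewrite lt_def l_neq0.
have hmin := mul_alpha_star_min l_gt0 ls r_ge0.
move: (alpha_star id Pt s2 l r) hmin a_ge0 a_le1 => a hmin a_ge0 a_le1.
have u_ge0 : 0 <= r * Pt by rewrite mulr_ge0 // ltW.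
rewrite -![_ * r * Pt]mulrA; move: (r * Pt) u_ge0 hmin => u u_ge0 hmin.
have sau_gt0 : 0 < s2 + a * u by rewrite ltr_wpDr // mulr_ge0.
have tangent : ln (1 + b * u / s2) <=
    ln (1 + a * u / s2) + (b - a) * u / (s2 + a * u).
  have -> : (b - a) * u / (s2 + a * u) =
      (1 + b * u / s2 - (1 + a * u / s2)) / (1 + a * u / s2).
    by field; rewrite !gt_eqF.
  by apply: ln_le_tangent; apply: ltr_pwDl; rewrite // divr_ge0 ?mulr_ge0 // ltW.
suff : (b - a) * u / (s2 + a * u) <= l * ((b - a) * u) by lra.
rewrite mulrC in hmin; have [k_le_u|u_lt_k] := leP (l^-1 - s2) u.
  rewrite hmin /Num.min ltNge k_le_u /=.
  by rewrite addrCA subrr addr0 invrK mulrC.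
have au : a * u = u by rewrite hmin /Num.min u_lt_k.
have ba_le0 : (b - a) * u <= 0 by rewrite mulrBl au subr_le0 ler_piMl.
rewrite au [X in _ <= X]mulrC ler_wnM2l //.
have su_gt0 : 0 < s2 + u by rewrite ltr_wpDr.
rewrite -(ler_pM2r su_gt0) mulVf ?gt_eqF //.
have : l * (s2 + u) < l * l^-1 by rewrite ltr_pM2l //; lra.
by rewrite mulfV ?gt_eqF //; lra.
Qed.

End water_filling.

Lemma le_integrable_scaled {d} {T : measurableType d} {R : realType}
    {mu : {measure set T -> \bar R}} {g k : T -> R} (c : R) :
  measurable_fun setT g -> mu.-integrable setT (EFin \o k) ->
  (forall x, `|g x| <= c * k x) -> mu.-integrable setT (EFin \o g).
Proof.
move=> mg ik gk.
apply: (@le_integrable _ _ _ mu _ measurableT _ (fun x => (c * k x)%:E)).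
- exact/measurable_EFinP.
- by move=> x _; rewrite !abse_EFin lee_fin (le_trans (gk x) (ler_norm _)).
- by under eq_fun do rewrite EFinM; exact: integrableZl.
Qed.

Lemma integral_EFin_Rintegral d (T : measurableType d) (R : realType)
    (mu : {measure set T -> \bar R}) (g : T -> R) :
  mu.-integrable setT (EFin \o g) ->
  (\int[mu]_x (g x)%:E)%E = (\int[mu]_x g x)%:E.
Proof. by move=> ig; rewrite fineK // integrable_fin_num. Qed.

Section power_splitting.
Context {d : measure_display} {T : measurableType d} {R : realType}.
Variables (Pr : probability T R) (h : T -> R) (Pt s2 Qbar : R).
Hypotheses (h_meas : measurable_fun setT h) (h_ge0 : forall x, 0 <= h x)
  (h_int : Pr.-integrable setT (EFin \o h))
  (Pt_gt0 : 0 < Pt) (s2_gt0 : 0 < s2).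

Let alpha l := alpha_star h Pt s2 l.
Let rate a := \int[Pr]_x ln (1 + a x * h x * Pt / s2).
Let power a := \int[Pr]_x ((1 - a x) * h x * Pt).

Lemma measurable_alpha_star {l} : 0 <= l -> l * s2 <= 1 ->
  measurable_fun setT (alpha l).
Proof.
move=> l_ge0 ls; apply: (measurableT_comp (f := alpha_star id Pt s2 l)) => //.
by apply: nonincreasing_measurable => // x y; exact: alpha_star_nonincreasing.
Qed.

Lemma box_feasible_alpha_star {l} : 0 <= l -> l * s2 <= 1 ->
  box_feasible (alpha l).
Proof.
move=> l_ge0 ls; split=> [|x]; first exact: measurable_alpha_star.
exact: alpha_star_itv.
Qed.

Lemma integrable_rate a : box_feasible a ->
  Pr.-integrable setT (fun x => (ln (1 + a x * h x * Pt / s2))%:E).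
Proof.
move=> [ma a01]; apply: (le_integrable_scaled (Pt / s2) _ h_int).
  apply: measurableT_comp => //; apply: measurable_funD => //.
  by do 3 apply: measurable_funM => //.
move=> x; have /andP[a_ge0 a_le1] := a01 x.
have hP_ge0 : 0 <= h x * Pt by rewrite mulr_ge0 // ltW.
have arg_ge0 : 0 <= a x * h x * Pt / s2.
  by rewrite divr_ge0 ?mulr_ge0 // ltW.
rewrite ger0_norm ?ln_ge0 ?lerDl //; apply: le_trans (le_ln1Dx _) _; first lra.
have -> : Pt / s2 * h x = h x * Pt / s2 by ring.
by rewrite -[_ * h x * Pt]mulrA ler_wpM2r ?invr_ge0 ?(ltW s2_gt0) ?ler_piMl.
Qed.

Lemma integrable_power a : box_feasible a ->
  Pr.-integrable setT (fun x => ((1 - a x) * h x * Pt)%:E).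
Proof.
move=> [ma a01]; apply: (le_integrable_scaled Pt _ h_int).
  by do 2 apply: measurable_funM => //; apply: measurable_funB.
move=> x; have /andP[a_ge0 a_le1] := a01 x.
have hP_ge0 : 0 <= h x * Pt by rewrite mulr_ge0 // ltW.
rewrite -mulrA ger0_norm; last by rewrite mulr_ge0 ?subr_ge0.
by rewrite (mulrC Pt) ler_piMl //; lra.
Qed.

Lemma integrable_hP : Pr.-integrable setT (fun x => (h x * Pt)%:E).
Proof.
apply: (le_integrable_scaled Pt _ h_int) => [|x].
  exact: measurable_funM.
by rewrite ger0_norm ?mulr_ge0 ?(ltW Pt_gt0) // mulrC.
Qed.

Lemma rate_objE a : box_feasible a -> rate_obj Pr h Pt s2 a = (rate a)%:E.
Proof.
by move=> ba; rewrite /rate_obj integral_EFin_Rintegral ?integrable_rate.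
Qed.

Lemma harvestE a : box_feasible a -> harvest Pr h Pt a = (power a)%:E.
Proof.
by move=> ba; rewrite /harvest integral_EFin_Rintegral ?integrable_power.
Qed.

Lemma lagrangianE l a : box_feasible a ->
  lagrangian Pr h Pt s2 Qbar l a = (rate a + l * (power a - Qbar))%:E.
Proof. by move=> ba; rewrite /lagrangian rate_objE // harvestE. Qed.

Lemma lagrangian_alpha_star_max {l b} : 0 <= l -> l * s2 <= 1 -> box_feasible b ->
  rate b + l * power b <= rate (alpha l) + l * power (alpha l).
Proof.
move=> l_ge0 ls bb; have ba := box_feasible_alpha_star l_ge0 ls.
have int_scaled_power a : box_feasible a ->
    Pr.-integrable setT (fun x => (l * ((1 - a x) * h x * Pt))%:E).
  move=> fa; under eq_fun do rewrite EFinM.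
  by apply: integrableZl => //; exact: integrable_power.
have int_integrand a : box_feasible a -> Pr.-integrable setT
    (fun x => (ln (1 + a x * h x * Pt / s2) + l * ((1 - a x) * h x * Pt))%:E).
  move=> fa; under eq_fun do rewrite EFinD.
  by apply: integrableD => //; [exact: integrable_rate|exact: int_scaled_power].
rewrite /rate /power -!RintegralZl ?integrable_power //.
rewrite -!RintegralD ?integrable_rate ?int_scaled_power //.
apply: le_Rintegral => //; [exact: int_integrand|exact: int_integrand|move=> x _].
have [_ /(_ x) bx] := bb.
exact: alpha_star_lagrangian_max.
Qed.

Lemma dual_funE l : 0 <= l -> l * s2 <= 1 ->
  dual_fun Pr h Pt s2 Qbar l = (rate (alpha l) + l * (power (alpha l) - Qbar))%:E.
Proof.
move=> l_ge0 ls; have ba := box_feasible_alpha_star l_ge0 ls.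
apply/eqP; rewrite eq_le; apply/andP; split.
  apply: ge_ereal_sup => _ [b bb <-]; rewrite lagrangianE // lee_fin.
  have := lagrangian_alpha_star_max l_ge0 ls bb; lra.
by rewrite -lagrangianE //; apply: ereal_sup_ubound; exists (alpha l).
Qed.

Lemma dual_optimal_slack {lam l} : dual_optimal Pr h Pt s2 Qbar lam ->
  0 <= l -> l * s2 <= 1 -> (lam - l) * (power (alpha l) - Qbar) <= 0.
Proof.
move=> [lam_ge0 lam_min] l_ge0 ls; have ba := box_feasible_alpha_star l_ge0 ls.
have lag_le : (lagrangian Pr h Pt s2 Qbar lam (alpha l) <=
    dual_fun Pr h Pt s2 Qbar lam)%E.
  by apply: ereal_sup_ubound; exists (alpha l).
have := le_trans lag_le (lam_min l l_ge0).
rewrite lagrangianE // dual_funE // lee_fin; lra.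
Qed.

Lemma power_alpha_star_integrand l x : 0 < l -> l * s2 <= 1 ->
  (1 - alpha l x) * h x * Pt = h x * Pt - Num.min (h x * Pt) (l^-1 - s2).
Proof.
move=> l_gt0 ls; rewrite -(mul_alpha_star_min Pt_gt0 l_gt0 ls (h_ge0 x)).
by rewrite -[alpha_star id _ _ _ _]/(alpha l x); ring.
Qed.

Lemma power_alpha_star0 : power (alpha 0) = 0.
Proof.
rewrite -[RHS](mul0r (fine (Pr setT))) -Rintegral_cst //.
by apply: eq_Rintegral => x _; rewrite /alpha alpha_star0 subrr !mul0r.
Qed.

Lemma power_alpha_star_inv_s2 :
  power (alpha s2^-1) = \int[Pr]_x (h x * Pt).
Proof.
apply: eq_Rintegral => x _.
rewrite power_alpha_star_integrand ?invr_gt0 ?mulVf ?gt_eqF // invrK subrr.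
have hP_ge0 : 0 <= h x * Pt by rewrite mulr_ge0 // ltW.
by rewrite /Num.min; case: ifPn => hP; rewrite ?subr0 //; lra.
Qed.

Lemma power_alpha_star_lipschitz {l1 l2} :
  0 < l1 -> l1 <= l2 -> l2 * s2 <= 1 ->
  power (alpha l2) <= power (alpha l1) + (l1^-1 - l2^-1).
Proof.
move=> l1_gt0 l12 l2s.
have l1s : l1 * s2 <= 1 by apply: le_trans l2s; rewrite ler_pM2r.
have ba1 := box_feasible_alpha_star (ltW l1_gt0) l1s.
have ba2 := box_feasible_alpha_star (ltW (lt_le_trans l1_gt0 l12)) l2s.
have icst := finite_measure_integrable_cst Pr (l1^-1 - l2^-1) measurableT.
have -> : l1^-1 - l2^-1 = \int[Pr]_x (l1^-1 - l2^-1).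
  rewrite Rintegral_cst //.
  by move: (probability_setT Pr) => /= ->; rewrite mulr1.
rewrite /power -RintegralD ?integrable_power //.
apply: le_Rintegral => //; first exact: integrable_power.
  apply: (eq_integrable measurableT _ _ _
    (integrableD measurableT (integrable_power _ ba1) icst)).
  by move=> x _; rewrite /= EFinD.
move=> x _; rewrite /alpha.
have := mul_alpha_star_lipschitz Pt_gt0 s2_gt0 l1_gt0 l12 l2s (h_ge0 x).
rewrite /=; lra.
Qed.

Lemma dual_optimal_le_inv_s2 lam : dual_optimal Pr h Pt s2 Qbar lam ->
  Qbar < \int[Pr]_x (h x * Pt) -> lam * s2 <= 1.
Proof.
move=> lam_opt Qbar_lt; have s2V_gt0 : 0 < s2^-1 by rewrite invr_gt0.
have s2Vs2 : s2^-1 * s2 <= 1 by rewrite mulVf ?gt_eqF.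
have := dual_optimal_slack lam_opt (ltW s2V_gt0) s2Vs2.
rewrite power_alpha_star_inv_s2 => slack.
rewrite leNgt; apply/negP => lam_gt.
have : s2^-1 < lam by rewrite -(ltr_pM2r s2_gt0) mulVf ?gt_eqF.
nra.
Qed.

Lemma inv_natDs2_gt0 (n : nat) : 0 < (n%:R + s2)^-1.
Proof. by rewrite invr_gt0 ltr_wpDl. Qed.

Lemma inv_natDs2_mul_s2_le1 (n : nat) : (n%:R + s2)^-1 * s2 <= 1.
Proof. by rewrite ler_pdivrMl ?ltr_wpDl // mulr1 lerDr. Qed.

Lemma harvest_alpha_star_cvg0 :
  (harvest Pr h Pt (alpha (n%:R + s2)^-1) @[n --> \oo] --> 0%E)%classic.
Proof.
pose F n x := ((1 - alpha (n%:R + s2)^-1 x) * h x * Pt)%:E.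
have F_min n x : F n x = (h x * Pt - Num.min (h x * Pt) n%:R)%:E.
  rewrite /F power_alpha_star_integrand ?inv_natDs2_gt0 //.
    by rewrite invrK addrK.
  exact: inv_natDs2_mul_s2_le1.
have F_meas n : measurable_fun setT (F n).
  apply: measurable_int; apply: integrable_power.
  exact: (box_feasible_alpha_star (ltW (inv_natDs2_gt0 n))
    (inv_natDs2_mul_s2_le1 n)).
have F_cvg : \forall x \ae Pr, setT x ->
    (F n x @[n --> \oo] --> cst (0 : \bar R) x)%classic.
  apply: aeW => x _; apply: cvg_near_cst; near=> n.
  have hP_le : h x * Pt <= n%:R by near: n; exact: nbhs_infty_ger.
  by rewrite F_min (min_idPl hP_le) subrr.
have F_dom : \forall x \ae Pr, forall n, setT x -> (`|F n x| <= (h x * Pt)%:E)%E.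
  apply: aeW => x n _; rewrite F_min abse_EFin lee_fin.
  have hP_ge0 : 0 <= h x * Pt by rewrite mulr_ge0 // ltW.
  rewrite /Num.min; case: ifPn => [_|]; first by rewrite subrr normr0.
  by rewrite -leNgt => hP; rewrite ger0_norm ?subr_ge0 // gerBl.
have [_ _] := dominated_convergence measurableT F_meas (measurable_cst _)
  F_cvg integrable_hP F_dom.
by rewrite integral0.
Unshelve. all: end_near.
Qed.

Lemma dual_optimal0_Qbar_le0 : dual_optimal Pr h Pt s2 Qbar 0 -> Qbar <= 0.
Proof.
move=> opt0; suff : (Qbar%:E <= 0)%E by rewrite lee_fin.
rewrite -(cvg_lim _ harvest_alpha_star_cvg0); last exact: ereal_hausdorff.
apply: lime_ge; first by apply/cvg_ex; exists 0%E; exact: harvest_alpha_star_cvg0.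
apply: nearW => n; have l_gt0 := inv_natDs2_gt0 n.
have ls := inv_natDs2_mul_s2_le1 n.
rewrite harvestE ?lee_fin; last exact: box_feasible_alpha_star (ltW l_gt0) ls.
have := dual_optimal_slack opt0 (ltW l_gt0) ls; nra.
Qed.

Section dual_optimum.
Variable lam : R.
Hypotheses (lam_opt : dual_optimal Pr h Pt s2 Qbar lam)
  (Qbar_lt : Qbar < \int[Pr]_x (h x * Pt)).

Let lam_ge0 : 0 <= lam. Proof. by case: lam_opt. Qed.
Let lam_s2 : lam * s2 <= 1. Proof. exact: dual_optimal_le_inv_s2. Qed.

(* The slack condition at levels [l] approaching [lam] from either side
   transfers to [lam] through [power_alpha_star_lipschitz]. *)
Lemma dual_optimal_power_ge : Qbar <= power (alpha lam).
Proof.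
have [lam0|lam_neq0] := eqVneq lam 0.
  by rewrite lam0 power_alpha_star0 dual_optimal0_Qbar_le0 -?lam0.
have lam_gt0 : 0 < lam by rewrite lt_def lam_neq0.
have [lam_s2_eq1|lam_s2_neq1] := eqVneq (lam * s2) 1.
  have -> : lam = s2^-1.
    by apply: (mulIf (lt0r_neq0 s2_gt0)); rewrite lam_s2_eq1 mulVf ?gt_eqF.
  by rewrite power_alpha_star_inv_s2 ltW.
have s2_lt : s2 < lam^-1.
  by rewrite -(ltr_pM2l lam_gt0) mulfV ?gt_eqF // lt_neqAle lam_s2_neq1.
apply/ler_addgt0Pr => eps eps_gt0.
pose e := Num.min eps ((lam^-1 - s2) / 2).
have e_gt0 : 0 < e by rewrite lt_min eps_gt0 divr_gt0 // subr_gt0.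
have e_le_eps : e <= eps by rewrite ge_min lexx.
have e_le_half : e <= (lam^-1 - s2) / 2 by rewrite ge_min lexx orbT.
clearbody e.
have s2_lt_lvl : s2 < lam^-1 - e by lra.
have lvl_gt0 : 0 < lam^-1 - e := lt_trans s2_gt0 s2_lt_lvl.
pose l := (lam^-1 - e)^-1.
have l_gt0 : 0 < l by rewrite invr_gt0.
have ls : l * s2 <= 1 by rewrite ler_pdivrMl // mulr1; lra.
have lam_lt_l : lam < l by rewrite -ltf_pV2 ?posrE // invrK; lra.
have := dual_optimal_slack lam_opt (ltW l_gt0) ls.
have := power_alpha_star_lipschitz lam_gt0 (ltW lam_lt_l) ls.
rewrite invrK; nra.
Qed.

Lemma dual_optimal_power_le : 0 < lam -> power (alpha lam) <= Qbar.
Proof.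
move=> lam_gt0; apply/ler_addgt0Pr => eps eps_gt0.
pose l := (lam^-1 + eps)^-1.
have l_gt0 : 0 < l by rewrite invr_gt0 addr_gt0 // invr_gt0.
have l_lt_lam : l < lam.
  by rewrite -ltf_pV2 ?posrE // invrK ltrDl.
have ls : l * s2 <= 1 by apply: le_trans lam_s2; rewrite ler_pM2r // ltW.
have := dual_optimal_slack lam_opt (ltW l_gt0) ls.
have := power_alpha_star_lipschitz l_gt0 (ltW l_lt_lam) lam_s2.
rewrite invrK; nra.
Qed.

Lemma alpha_star_P1_optimal : P1_optimal Pr h Pt s2 Qbar (alpha lam).
Proof.
have ba := box_feasible_alpha_star lam_ge0 lam_s2.
split; first by split; rewrite // harvestE // lee_fin dual_optimal_power_ge.
move=> b [bb]; rewrite harvestE // !rate_objE // !lee_fin => Qbar_le.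
have := lagrangian_alpha_star_max lam_ge0 lam_s2 bb.
suff : lam * power (alpha lam) <= lam * power b by lra.
have [->|lam_neq0] := eqVneq lam 0; first by rewrite !mul0r.
have lam_gt0 : 0 < lam by rewrite lt_def lam_neq0.
by rewrite ler_pM2l // (le_trans (dual_optimal_power_le lam_gt0)).
Qed.

End dual_optimum.
End power_splitting.

Local Open Scope classical_set_scope.

Theorem proposition4p1 (d : measure_display) (T : measurableType d)
  (R : realType) (Pr : probability T R) (h : T -> R) (Pt s2 Qbar lam : R)
  (h_meas : measurable_fun setT h)
  (h_ge0 : forall x, 0 <= h x)
  (h_int : Pr.-integrable setT (fun x => (h x)%:E))
  (h_pdf : exists f : R -> R,
      measurable_fun setT f /\ (forall r, 0 <= f r) /\
      (forall A, measurable A ->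
         Pr (h @^-1` A) = (\int[@lebesgue_measure R]_(r in A) (f r)%:E)%E))
  (Pt_gt0 : 0 < Pt) (s2_gt0 : 0 < s2)
  (Qbar_ge0 : 0 <= Qbar)
  (Qbar_lt : (Qbar%:E < \int[Pr]_x (h x * Pt)%:E)%E)
  (lam_opt : dual_optimal Pr h Pt s2 Qbar lam) :
  P1_optimal Pr h Pt s2 Qbar (alpha_star h Pt s2 lam).
Proof.
apply: alpha_star_P1_optimal => //.
by rewrite -lte_fin -integral_EFin_Rintegral //; exact: integrable_hP.
Qed.
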